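(* Let $\mathcal H$ be a functional unit for $\mathbb S$ with $(\mathrm{dup},\mathrm{Dup})\in\mathcal H$, and let $I\subseteq IF(\mathcal H)$ with $\mathrm{dup}\in I$. Then there does not exist an $x\in\mathcal L_f(IF(\mathcal H))$ that produces a reflexive solution of the halting problem for $\mathcal L_f(I)$ with respect to $\mathcal H$.
   Context: Instruction sequences: Fix a symbol $f$ (the focus). For a set $I$ of method names, $\mathcal L_f(I)$ is the set of all finite sequences $u_1;\ldots;u_k$ ($k\ge1$) of primitive instructions, each of which is one of: $f.m$, $+f.m$, $-f.m$ with $m\in I$ (plain basic, positive test, negative test instruction); $\#l$ or $\backslash\#l$ with $l\in\mathbb N$ (forward / backward jump); $!t$ (positive termination); $!f$ (negative termination). Functional units: for a nonempty set $S$, a method operation on $S$ is a total function $M:S\to\{T,F\}\times S$. A functional unit for $S$ is a finite set $\mathcal H$ of pairs $(m,M)$ ($m$ a method name, $M$ a method operation on $S$) in which each method name occurs at most once; $IF(\mathcal H)$ is the set of method names occurring in $\mathcal H$, and $m_{\mathcal H}$ is the method operation paired with $m\in IF(\mathcal H)$. Execution: for $x=u_1;\ldots;u_k$, a functional unit $\mathcal H$ for $S$ and $s\in S$, the execution of $x$ on $\mathcal H(s)$ is the deterministic run through configurations $(i,t)$ (instruction position, current state) starting at $(1,s)$: if $i\notin\{1,\ldots,k\}$ the run stops without terminating (deadlock); if $u_i$ is $f.m$, $+f.m$ or $-f.m$ with $m\notin IF(\mathcal H)$ the run stops without terminating; otherwise, with $(b,t')=m_{\mathcal H}(t)$: $u_i=f.m$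 leads to $(i+1,t')$; $u_i=+f.m$ leads to $(i+1,t')$ if $b=T$ and to $(i+2,t')$ if $b=F$; $u_i=-f.m$ leads to $(i+2,t')$ if $b=T$ and to $(i+1,t')$ if $b=F$; $u_i=\#l$ leads to $(i+l,t)$; $u_i=\backslash\#l$ leads to $(i-l,t)$; $u_i=!t$ (resp. $!f$) makes the run terminate with value $T$ (resp. $F$) and final state $t$. We say $x$ converges on $\mathcal H(s)$, written $x\downarrow\mathcal H(s)$, if the run reaches $!t$ or $!f$ after finitely many steps; otherwise $x$ diverges on $\mathcal H(s)$, written $x\uparrow\mathcal H(s)$. The reply $\mathrm{rep}(x,\mathcal H(s))\in\{T,F,D\}$ is the termination value if $x\downarrow\mathcal H(s)$ and $D$ (divergent) otherwise. Tape states: $\mathbb S=\{v\triangleright w : v,w\in\{0,1,:\}^*\}$, formal pairs of strings over the alphabet $\{0,1,:\}$ (':' is the colon symbol, $\triangleright$ marks the head position); $\triangleright w$ denotes the state with empty left part and right part $w$, and juxtaposition denotes concatenation, so e.g. $\triangleright v:w$ has right part $v$, then a colon, then $w$. For each functional unit $\mathcal H$ for $\mathbb S$ a fixed injective encoding $x\mapsto\overline x$ from $\mathcal L_f(IF(\mathcal H))$ into $\{0,1\}^*$ is given. Duplication: $\mathrm{dup}$ is a method name and $\mathrm{Dup}$ is the method operation on $\mathbb S$ given by $\mathrm{Dup}(v\triangleright w)=\mathrm{Dup}(\triangleright vw)$; $\mathrm{Dup}(\triangleright v)=(T,\triangleright v:v)$ for $v\in\{0,1\}^*$; $\mathrm{Dup}(\triangleright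 v:w)=(T,\triangleright v:v:w)$ for $v\in\{0,1\}^*$, $w\in\{0,1,:\}^*$. Halting problem solutions: let $\mathcal H$ be a functional unit for $\mathbb S$ and $I\subseteq IF(\mathcal H)$. An $x\in\mathcal L_f(IF(\mathcal H))$ produces a solution of the halting problem for $\mathcal L_f(I)$ with respect to $\mathcal H$ if (i) $x\downarrow\mathcal H(s)$ for all $s\in\mathbb S$, and (ii) for all $y\in\mathcal L_f(I)$ and $v\in\{0,1,:\}^*$: $\mathrm{rep}(x,\mathcal H(\triangleright\overline y:v))=T$ iff $y\downarrow\mathcal H(\triangleright v)$. It produces a reflexive solution if moreover $x\in\mathcal L_f(I)$. *)

From mathcomp Require Import all_boot.
From Stdlib Require List.
Set Implicit Arguments. Unset Strict Implicit. Unset Printing Implicit Defensive.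

(* ---------- Instruction sequences (focus f fixed, hence omitted) ---------- *)
Inductive instr (MN : Type) : Type :=
  | Basic of MN        (* f.m   *)
  | PTest of MN        (* +f.m  *)
  | NTest of MN        (* -f.m  *)
  | FJump of nat       (* #l    *)
  | BJump of nat       (* \#l   *)
  | PTerm              (* !t    *)
  | NTerm.             (* !f    *)
Arguments PTerm {MN}. Arguments NTerm {MN}.

Definition instr_ok (MN : Type) (I : MN -> Prop) (u : instr MN) : Prop :=
  match u with
  | Basic m | PTest m | NTest m => I m
  | _ => True
  end.

Definition in_L (MN : Type) (I : MN -> Prop) (x : seq (instr MN)) : Prop :=
  x <> [::] /\ List.Forall (instr_ok I) x.

Inductive sym := S0 | S1 | Col.
Definition is_col (a : sym) : bool := if a is Col then true else false.

(* v |> w  is represented as the pair (v, w) *)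
Definition state := (seq sym * seq sym)%type.
Definition start (w : seq sym) : state := ([::], w).
Definition bit (b : bool) : sym := if b then S1 else S0.

Definition method (S : Type) := S -> bool * S.   (* T = true, F = false *)
Definition funit (MN : Type) (S : Type) := seq (MN * method S).

Definition IF (MN : eqType) S (H : funit MN S) : seq MN := map fst H.
Definition wf_funit (MN : eqType) S (H : funit MN S) : Prop := uniq (IF H).

Fixpoint lookup (MN : eqType) S (H : funit MN S) (m : MN) : option (method S) :=
  match H with
  | [::] => None
  | (m', M) :: H' => if m' == m then Some M else lookup H' m
  end.

(* run x H n i s : result of at most n steps from configuration (i, s);
   Some (b, t) = terminated with value b and final state t; None = not
   (yet) terminated or stopped without terminating. Positions are 1..k. *)
Fixpoint run (MN : eqType) S (x : seq (instr MN)) (H : funit MN S)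
    (n : nat) (i : nat) (s : S) : option (bool * S) :=
  match n with
  | 0 => None
  | n'.+1 =>
    if (i == 0) || (size x < i) then None else
    match nth PTerm x i.-1 with
    | Basic m => match lookup H m with
                 | None => None
                 | Some M => run x H n' i.+1 (M s).2
                 end
    | PTest m => match lookup H m with
                 | None => None
                 | Some M => let (b, t) := M s in
                             run x H n' (if b then i.+1 else i.+2) t
                 end
    | NTest m => match lookup H m with
                 | None => None
                 | Some M => let (b, t) := M s in
                             run x H n' (if b then i.+2 else i.+1) t
                 end
    | FJump l => run x H n' (i + l) s
    | BJump l => run x H n' (i - l) s  (* i - l <= 0 is out of range *)
    | PTerm => Some (true, s)
    | NTerm => Some (false, s)
    end
  end.

Definition converges (MN : eqType) S (x : seq (instr MN)) (H : funit MN S) (s : S) : Prop :=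
  exists n r, run x H n 1 s = Some r.

Inductive reply := RT | RF | RD.

Definition rep_is (MN : eqType) S (x : seq (instr MN)) (H : funit MN S) (s : S)
    (r : reply) : Prop :=
  match r with
  | RT => exists n t, run x H n 1 s = Some (true, t)
  | RF => exists n t, run x H n 1 s = Some (false, t)
  | RD => ~ converges x H s
  end.

(* Dup(v |> w) = Dup(|> vw); Dup(|> v) = (T, |> v:v) for colon-free v;
   Dup(|> v:w) = (T, |> v:v:w) for colon-free v. *)
Definition Dup : method state := fun st =>
  let u := st.1 ++ st.2 in
  let k := find is_col u in
  let v := take k u in
  if k == size u then (true, start (v ++ Col :: v))
  else (true, start (v ++ Col :: v ++ Col :: drop k.+1 u)).

Definition halting_solution (MN : eqType) (H : funit MN state) (I : MN -> Prop)
    (enc : seq (instr MN) -> seq bool) (x : seq (instr MN)) : Prop :=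
  (forall s, converges x H s) /\
  (forall (y : seq (instr MN)) (v : seq sym), in_L I y ->
     (rep_is x H (start (map bit (enc y) ++ Col :: v)) RT <-> converges y H (start v))).

Definition reflexive_solution (MN : eqType) (H : funit MN state) (I : MN -> Prop)
    (enc : seq (instr MN) -> seq bool) (x : seq (instr MN)) : Prop :=
  halting_solution H I enc x /\ in_L I x.

(* Diagonalisation.  From a would-be reflexive solution x
   build y = dup; x', where x' is x with !t replaced by the self-loop #0 and
   !f replaced by !t.  On input |> v with v = enc y, the first instruction of
   y produces |> v:v and y then behaves as x on that input, shifted by one
   position: if x answers T (y halts on v) then y diverges, and if x answers
   F (y diverges on v) then y halts.  Since x halts on every input, this is a
   contradiction either way. *)
From mathcomp Require Import all_boot.
From Stdlib Require List.

Set Implicit Arguments.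
Unset Strict Implicit.
Unset Printing Implicit Defensive.

Lemma Dup_start_colfree (v : seq sym) :
  ~~ has is_col v -> Dup (start v) = (true, start (v ++ Col :: v)).
Proof. by move=> nocol_v; rewrite /Dup /= (hasNfind nocol_v) eqxx take_size. Qed.

Lemma colfree_bits (bs : seq bool) : ~~ has is_col (map bit bs).
Proof. by rewrite has_map; apply/hasPn => -[]. Qed.

Lemma mem_IF (MN : eqType) S (H : funit MN S) (m : MN) (M : method S) :
  List.In (m, M) H -> m \in IF H.
Proof.
elim: H => //= -[m' M'] H IH [[-> _]|inH]; first by rewrite mem_head.
by rewrite inE IH ?orbT.
Qed.

Lemma lookup_In (MN : eqType) S (H : funit MN S) (m : MN) (M : method S) :
  wf_funit H -> List.In (m, M) H -> lookup H m = Some M.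
Proof.
elim: H => //= -[m' M'] H IH /andP[m'_notin uniqH] [[-> ->]|inH].
  by rewrite eqxx.
case: eqP => [m'm|_]; last exact: IH.
by move/negP: m'_notin; rewrite m'm (mem_IF inH).
Qed.

Lemma run_at0 (MN : eqType) S (z : seq (instr MN)) (H : funit MN S) n s :
  run z H n 0 s = None.
Proof. by case: n. Qed.

Section Diagonal.

Variables (MN : eqType) (H : funit MN state) (dup : MN).

Definition diag_instr (u : instr MN) : instr MN :=
  match u with PTerm => FJump _ 0 | NTerm => PTerm | u => u end.

Definition diag (x : seq (instr MN)) : seq (instr MN) :=
  Basic dup :: map diag_instr x.

Lemma in_L_diag (I : MN -> Prop) x : I dup -> in_L I x -> in_L I (diag x).
Proof.
move=> Idup [_ okx]; split=> //; constructor=> //.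
by apply/List.Forall_map; apply: List.Forall_impl okx => -[].
Qed.

Variable x : seq (instr MN).

Lemma nth_diag i : 0 < i <= size x ->
  nth PTerm (diag x) i = diag_instr (nth PTerm x i.-1).
Proof.
case: i => // i /= lt_i_x.
by rewrite (set_nth_default (diag_instr PTerm)) ?size_map // (nth_map PTerm).
Qed.

Lemma run_diag_selfloop m j s :
  nth PTerm (diag x) j.-1 = FJump _ 0 -> run (diag x) H m j s = None.
Proof.
move=> loop_j; elim: m => //= m IH.
by case: (_ || _) => //; rewrite loop_j addn0.
Qed.

(* Position i of x is position i.+1 of diag x; a backward jump that
   deadlocks in x (target 0) lands on the leading dup in diag x only when
   l = i, and then x itself has already deadlocked. *)
Lemma run_diag_false n i s t : run x H n i s = Some (false, t) ->
  run (diag x) H n i.+1 s = Some (true, t).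
Proof.
elim: n i s => //= n IH i s.
have [->|i_gt0] := posnP i => //.
case: leqP => [i_le_x|_]; last by rewrite orbT.
rewrite /= size_map ltnS ltnNge i_le_x /= nth_diag ?i_gt0 //.
case: (nth PTerm x i.-1) => //= [m|m|m|l|l|[<-]] //.
- by case: (lookup H m) => // M; apply: IH.
- by case: (lookup H m) => // M; case: (M s) => -[] t'; apply: IH.
- by case: (lookup H m) => // M; case: (M s) => -[] t'; apply: IH.
- by rewrite addSn; apply: IH.
- case: (leqP l i) => [le_l_i|lt_i_l]; first by rewrite subSn //; apply: IH.
  by rewrite (eqP (ltnW lt_i_l) : i - l = 0) run_at0.
Qed.

Lemma run_diag_true n i s t : run x H n i s = Some (true, t) ->
  forall m, run (diag x) H m i.+1 s = None.
Proof.
elim: n i s => //= n IH i s.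
have [->|i_gt0] := posnP i => //.
case: leqP => [i_le_x|_]; last by rewrite orbT.
rewrite /= => run_x [|m] //=.
rewrite size_map ltnS ltnNge i_le_x /= nth_diag ?i_gt0 //.
move: run_x; case nth_x: (nth PTerm x i.-1) => [m'|m'|m'|l|l||] //=.
- by case: (lookup H m') => // M /IH.
- by case: (lookup H m') => // M; case: (M s) => -[] t' /IH.
- by case: (lookup H m') => // M; case: (M s) => -[] t' /IH.
- by rewrite addSn => /IH.
- case: (leqP l i) => [le_l_i|lt_i_l]; first by rewrite subSn // => /IH.
  by rewrite (eqP (ltnW lt_i_l) : i - l = 0) run_at0.
- by move=> _; rewrite addn0; apply: run_diag_selfloop; rewrite /= nth_diag ?i_gt0 ?nth_x.
Qed.

Hypothesis lookup_dup : lookup H dup = Some Dup.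

Lemma diag_converges_of_false (v : seq sym) : ~~ has is_col v ->
  rep_is x H (start (v ++ Col :: v)) RF -> converges (diag x) H (start v).
Proof.
move=> nocol_v [n [t run_x]]; exists n.+1, (true, t).
by rewrite /= lookup_dup Dup_start_colfree //=; apply: run_diag_false.
Qed.

Lemma diag_diverges_of_true (v : seq sym) : ~~ has is_col v ->
  rep_is x H (start (v ++ Col :: v)) RT -> ~ converges (diag x) H (start v).
Proof.
move=> nocol_v [n [t run_x]] [[|m] [r]] //=.
by rewrite lookup_dup Dup_start_colfree //= (run_diag_true run_x).
Qed.

End Diagonal.

Theorem theorem4 (MN : eqType) (dup : MN) (H : funit MN state)
  (enc : seq (instr MN) -> seq bool)
  (Hwf : wf_funit H)
  (Henc : forall x y, in_L (fun m => m \in IF H) x -> in_L (fun m => m \in IF H) y ->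
            enc x = enc y -> x = y)
  (Hdup : List.In (dup, Dup) H)
  (I : MN -> Prop) (HI : forall m, I m -> m \in IF H) (HdupI : I dup) :
  ~ exists x, in_L (fun m => m \in IF H) x /\ reflexive_solution H I enc x.
Proof.
move=> [x [_ [[x_total x_decides] x_in_L]]].
have lookup_dup := lookup_In Hwf Hdup.
set y := diag dup x; set v := map bit (enc y).
have nocol_v : ~~ has is_col v by apply: colfree_bits.
have x_on_y := x_decides y v (in_L_diag HdupI x_in_L).
have y_div : rep_is x H (start (v ++ Col :: v)) RT -> ~ converges y H (start v).
  exact: diag_diverges_of_true.
have [n [[[] t] run_x]] := x_total (start (v ++ Col :: v)).
- have y_conv : converges y H (start v) by apply/x_on_y; exists n, t.
  by apply: (y_div _ y_conv); exists n, t.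
- have y_conv : converges y H (start v).
    by apply: diag_converges_of_false => //; exists n, t.
  by apply: (y_div _ y_conv); apply/x_on_y.
Qed.
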